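(* Let $\Lambda=(W_j,\Lambda_j,v_j)_{j\in\mathbb{J}}$ be a g-fusion frame for $H$ with g-fusion frame operator $S_\Lambda$, let $\mathbb{I}\subseteq\mathbb{J}$, and set $S_{\mathbb{I}}f:=\sum_{j\in\mathbb{I}}v_j^2\pi_{W_j}\Lambda_j^*\Lambda_j\pi_{W_j}f$. Then $$0\le S_{\mathbb{I}}-S_{\mathbb{I}}S_\Lambda^{-1}S_{\mathbb{I}}\le\frac14 S_\Lambda$$ in the order of self-adjoint operators.
   Context: $H$ is a separable Hilbert space, $\mathbb{J}\subseteq\mathbb{Z}$, $\{H_j\}_{j\in\mathbb{J}}$ are separable Hilbert spaces, $\Lambda_j\in\mathcal{B}(H,H_j)$, $W_j$ are closed subspaces of $H$, $v_j>0$, and $\pi_V$ denotes the orthogonal projection onto a closed subspace $V$. The triple $\Lambda=(W_j,\Lambda_j,v_j)$ is a g-fusion frame for $H$ if there exist $0<A\le B<\infty$ with $A\Vert f\Vert^2\le\sum_{j\in\mathbb{J}}v_j^2\Vert\Lambda_j\pi_{W_j}f\Vert^2\le B\Vert f\Vert^2$ for all $f\in H$. Its g-fusion frame operator is $S_\Lambda f=\sum_{j\in\mathbb{J}}v_j^2\pi_{W_j}\Lambda_j^*\Lambda_j\pi_{W_j}f$ (bounded, positive, invertible). $T\le U$ means $\langle Tf,f\rangle\le\langle Uf,f\rangle$ for all $f$. *)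

From HB Require Import structures.
From mathcomp Require Import all_boot all_order all_algebra.
From mathcomp Require Import boolp classical_sets reals.
From mathcomp Require Export complex.
Set Implicit Arguments.
Unset Strict Implicit.
Unset Printing Implicit Defensive.
Import Order.TTheory GRing.Theory Num.Theory.
Local Open Scope ring_scope.

Section Hilbert.
Variable R : realType.
Local Notation C := R[i].

(* The order on C (numClosedFieldType) is the partial order:
   x <= y  iff  y - x is a nonnegative real. *)

Definition is_hilbert (V : lmodType C) (ip : V -> V -> C) : Prop :=
  [/\ (forall (a : C) (x y z : V), ip (a *: x + y) z = a * ip x z + ip y z),
      (forall x y : V, ip y x = (ip x y)^*),
      (forall x : V, 0 <= ip x x /\ (ip x x = 0 -> x = 0)),
      (forall u : nat -> V,
         (forall e : C, 0 < e -> exists N : nat, forall m n : nat,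
              (N <= m)%N -> (N <= n)%N -> ip (u m - u n) (u m - u n) < e) ->
         exists x : V, forall e : C, 0 < e -> exists N : nat, forall n : nat,
              (N <= n)%N -> ip (u n - x) (u n - x) < e) &
      (exists d : nat -> V, forall (x : V) (e : C), 0 < e ->
              exists k : nat, ip (x - d k) (x - d k) < e)].

(** Unconditional convergence of a sum indexed by a subset D of Z:
    [has_sum n2 D u x] means that the finite partial sums over finite
    subsets of D converge (along the net of finite subsets) to x, where
    n2 is the squared norm. *)
Definition has_sum (V : zmodType) (n2 : V -> C) (D : set int)
    (u : int -> V) (x : V) : Prop :=
  forall e : C, 0 < e -> exists F0 : seq int, (forall j, j \in F0 -> D j) /\
    forall F : seq int, uniq F -> (forall j, j \in F -> D j) ->
      {subset F0 <= F} ->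
      n2 (x - \sum_(j <- F) u j) < e.

Definition cn2 (z : C) : C := z * z^*.

Definition bounded_linear (V W : lmodType C) (ipV : V -> V -> C)
    (ipW : W -> W -> C) (L : V -> W) : Prop :=
  (forall (a : C) (x y : V), L (a *: x + y) = a *: L x + L y) /\
  exists M : C, 0 <= M /\ forall x : V, ipW (L x) (L x) <= M * ipV x x.

Definition is_adjoint (V W : lmodType C) (ipV : V -> V -> C)
    (ipW : W -> W -> C) (L : V -> W) (Ls : W -> V) : Prop :=
  forall (x : V) (y : W), ipW (L x) y = ipV x (Ls y).

Definition closed_subspace (V : lmodType C) (ip : V -> V -> C)
    (Wsp : V -> Prop) : Prop :=
  [/\ Wsp 0,
      (forall (a : C) (x y : V), Wsp x -> Wsp y -> Wsp (a *: x + y)) &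
      (forall x : V, (forall e : C, 0 < e -> exists w, Wsp w /\
                         ip (x - w) (x - w) < e) -> Wsp x)].

Definition is_orth_proj (V : lmodType C) (ip : V -> V -> C)
    (Wsp : V -> Prop) (P : V -> V) : Prop :=
  forall f : V, Wsp (P f) /\ forall w : V, Wsp w -> ip (f - P f) w = 0.

Definition gfusion_frame (H : lmodType C) (ip : H -> H -> C)
    (Hj : int -> lmodType C) (ipj : forall j, Hj j -> Hj j -> C)
    (J : set int) (W : int -> H -> Prop) (P : int -> H -> H)
    (Lam : forall j, H -> Hj j) (v : int -> R) : Prop :=
  [/\ (forall j, J j -> closed_subspace ip (W j) /\ is_orth_proj ip (W j) (P j)),
      (forall j, J j -> 0 < v j),
      (forall j, J j -> bounded_linear ip (@ipj j) (Lam j)) &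
      exists A B : R, [/\ 0 < A, A <= B &
        forall f : H, exists s : C,
          has_sum cn2 J
            (fun j => ((v j) ^+ 2)%:C%C *
                      ipj j (Lam j (P j f)) (Lam j (P j f))) s
          /\ (A%:C%C * ip f f <= s) /\ (s <= B%:C%C * ip f f)]].

Definition is_partial_frame_op (H : lmodType C) (ip : H -> H -> C)
    (Hj : int -> lmodType C) (D : set int) (P : int -> H -> H)
    (Lam : forall j, H -> Hj j) (Lams : forall j, Hj j -> H) (v : int -> R)
    (Sop : H -> H) : Prop :=
  forall f : H, has_sum (fun x => ip x x) D
     (fun j => ((v j) ^+ 2)%:C%C *: P j (Lams j (Lam j (P j f)))) (Sop f).

End Hilbert.

From mathcomp Require Import all_boot all_order all_algebra.
From mathcomp Require Import boolp classical_sets reals complex.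
From mathcomp Require Import ring.
Import Order.TTheory GRing.Theory Num.Theory.
Local Open Scope ring_scope.
Set Implicit Arguments.
Unset Strict Implicit.
Unset Printing Implicit Defensive.

(* Both partial frame operators are sums of positive self-adjoint operators,
   so 0 <= S_I <= S.  Writing h = S^-1 S_I f, one has
   <(S_I - S_I S^-1 S_I) f, f> = <S_I (f - h), f - h> + <(S - S_I) h, h> >= 0,
   and <S (h - f/2), h - f/2> >= 0 expands to
   <S_I S^-1 S_I f, f> - <S_I f, f> + <S f, f>/4 >= 0, the upper bound. *)

(* [has_sum n2 D u x] unfolds to
   [forall e, 0 < e -> ev_fin D (fun F => n2 (x - \sum_(j <- F) u j) < e)]:
   convergence along the net of finite subsets of D. *)
Definition ev_fin (D : set int) (Q : seq int -> Prop) : Prop :=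
  exists F0 : seq int, (forall j, j \in F0 -> D j) /\
    forall F : seq int, uniq F -> (forall j, j \in F -> D j) ->
      {subset F0 <= F} -> Q F.

Lemma ev_finI D Q1 Q2 : ev_fin D Q1 -> ev_fin D Q2 -> ev_fin D (fun F => Q1 F /\ Q2 F).
Proof.
move=> [F1 [F1D Q1F]] [F2 [F2D Q2F]]; exists (F1 ++ F2); split.
  by move=> j; rewrite mem_cat => /orP [/F1D|/F2D].
move=> F uF FD sub; split.
  by apply: Q1F => // j j1; apply: sub; rewrite mem_cat j1.
by apply: Q2F => // j j2; apply: sub; rewrite mem_cat j2 orbT.
Qed.

Lemma ev_fin_witness D Q :
  ev_fin D Q -> exists F, [/\ uniq F, (forall j, j \in F -> D j) & Q F].
Proof.
move=> [F0 [F0D QF]]; have F0uD j : j \in undup F0 -> D j by rewrite mem_undup => /F0D.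
exists (undup F0); split=> //; first exact: undup_uniq.
by apply: QF => // [|j]; [exact: undup_uniq | rewrite mem_undup].
Qed.

Lemma ev_fin_filter (I J : set int) Q : (I `<=` J)%classic -> ev_fin I Q ->
  ev_fin J (fun F => Q [seq j <- F | `[< I j >]]).
Proof.
move=> IJ [F0 [F0I QF]]; exists F0; split=> [j /F0I /IJ //|F uF FJ sub].
apply: QF; first exact: filter_uniq.
  by move=> j; rewrite mem_filter => /andP [/asboolP].
by move=> j j0; rewrite mem_filter (sub _ j0) andbT; apply/asboolP/F0I.
Qed.

Section NetLimits.
Variable R : realType.
Local Notation C := R[i].

Definition cvg_fin (D : set int) (s : seq int -> C) (c : C) : Prop :=
  forall e : C, 0 < e -> ev_fin D (fun F => `|c - s F| < e).

Lemma cvg_fin_uniq D s c1 c2 : cvg_fin D s c1 -> cvg_fin D s c2 -> c1 = c2.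
Proof.
move=> h1 h2; apply/eqP; rewrite -subr_eq0; apply/contraT => n0.
have e0 : 0 < `|c1 - c2| / 2 by rewrite divr_gt0 // normr_gt0.
have [F [_ _ [k1 k2]]] := ev_fin_witness (ev_finI (h1 _ e0) (h2 _ e0)).
have : `|(c1 - s F) - (c2 - s F)| < `|c1 - c2| / 2 + `|c1 - c2| / 2.
  by apply: le_lt_trans (ler_normB _ _) _; rewrite ltrD.
by rewrite opprB addrA subrK -splitr ltxx.
Qed.

Lemma cvg_fin_ext D s1 s2 c : (forall F, (forall j, j \in F -> D j) -> s1 F = s2 F) ->
  cvg_fin D s1 c -> cvg_fin D s2 c.
Proof.
move=> s12 h e e0; have [F0 [F0D k]] := h e e0.
by exists F0; split=> // F uF FD sub; rewrite -s12 //; apply: k.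
Qed.

Lemma cvg_finD D s1 s2 c1 c2 : cvg_fin D s1 c1 -> cvg_fin D s2 c2 ->
  cvg_fin D (fun F => s1 F + s2 F) (c1 + c2).
Proof.
move=> h1 h2 e e0; have e20 : 0 < e / 2 by rewrite divr_gt0.
have [F0 [F0D k]] := ev_finI (h1 _ e20) (h2 _ e20).
exists F0; split=> // F uF FD sub; have [k1 k2] := k F uF FD sub.
have -> : c1 + c2 - (s1 F + s2 F) = (c1 - s1 F) + (c2 - s2 F) by ring.
by apply: le_lt_trans (ler_normD _ _) _; rewrite (splitr e) ltrD.
Qed.

Lemma cvg_finZ D s c (a : C) : cvg_fin D s c -> cvg_fin D (fun F => a * s F) (a * c).
Proof.
move=> h e e0; have a0 : 0 < `|a| + 1 by rewrite ltr_wpDl.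
have [F0 [F0D k]] := h _ (divr_gt0 e0 a0).
exists F0; split=> // F uF FD sub; rewrite -mulrBr normrM.
apply: le_lt_trans (_ : _ <= (`|a| + 1) * `|c - s F|) _.
  by rewrite ler_wpM2r // lerDl.
by rewrite mulrC -ltr_pdivlMr //; apply: k.
Qed.

Lemma cvg_finB D s1 s2 c1 c2 : cvg_fin D s1 c1 -> cvg_fin D s2 c2 ->
  cvg_fin D (fun F => s1 F - s2 F) (c1 - c2).
Proof.
move=> h1 h2; rewrite -mulN1r; apply: cvg_fin_ext (cvg_finD h1 (cvg_finZ (-1) h2)).
by move=> F _; rewrite mulN1r.
Qed.

Lemma cvg_fin_conj D s c : cvg_fin D s c -> cvg_fin D (fun F => (s F)^*) c^*.
Proof.
move=> h e e0; have [F0 [F0D k]] := h e e0.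
by exists F0; split=> // F uF FD sub; rewrite -rmorphB norm_conjC; apply: k.
Qed.

Lemma cvg_fin_ge0 D s c : (forall F, (forall j, j \in F -> D j) -> 0 <= s F) ->
  cvg_fin D s c -> 0 <= c.
Proof.
move=> s_ge0 h.
have c_real : c \is Num.real.
  rewrite CrealE; apply/eqP; apply: cvg_fin_uniq (cvg_fin_conj h) _.
  by apply: cvg_fin_ext h => F FD; rewrite geC0_conj // s_ge0.
rewrite real_leNgt ?real0 //; apply/negP => c_lt0.
have Nc_gt0 : 0 < - c by rewrite oppr_gt0.
have [F [_ FD k]] := ev_fin_witness (h _ Nc_gt0).
have sF_real : s F \is Num.real by apply/ger0_real/s_ge0.
have := real_ltrNnormlW (rpredB c_real sF_real) k.
by rewrite opprK ltrDl oppr_gt0 => /lt_geF; rewrite s_ge0.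
Qed.

Lemma cvg_fin_filter (I J : set int) s c : (I `<=` J)%classic ->
  cvg_fin I s c -> cvg_fin J (fun F => s [seq j <- F | `[< I j >]]) c.
Proof. by move=> IJ h e e0; apply: ev_fin_filter IJ (h e e0). Qed.

End NetLimits.

Section InnerProduct.
Variables (R : realType) (V : lmodType R[i]) (ip : V -> V -> R[i]).
Hypothesis ipl : forall (a : R[i]) (x y z : V), ip (a *: x + y) z = a * ip x z + ip y z.
Hypothesis ipC : forall x y : V, ip y x = (ip x y)^*.
Hypothesis ip_posdef : forall x : V, 0 <= ip x x /\ (ip x x = 0 -> x = 0).

Lemma ip0l z : ip 0 z = 0.
Proof.
have := ipl 1 0 0 z; rewrite scaler0 addr0 mul1r => ip0D.
by apply: (addrI (ip 0 z)); rewrite addr0 -ip0D.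
Qed.

Lemma ipZl a x z : ip (a *: x) z = a * ip x z.
Proof. by have := ipl a x 0 z; rewrite addr0 ip0l addr0. Qed.

Lemma ipDl x y z : ip (x + y) z = ip x z + ip y z.
Proof. by have := ipl 1 x y z; rewrite scale1r mul1r. Qed.

Lemma ipBl x y z : ip (x - y) z = ip x z - ip y z.
Proof. by rewrite ipDl -scaleN1r ipZl mulN1r. Qed.

Lemma ipZr a x z : ip z (a *: x) = a^* * ip z x.
Proof. by rewrite ipC ipZl rmorphM /= -ipC. Qed.

Lemma ipDr x y z : ip z (x + y) = ip z x + ip z y.
Proof. by rewrite ipC ipDl rmorphD /= -!ipC. Qed.

Lemma ipBr x y z : ip z (x - y) = ip z x - ip z y.
Proof. by rewrite ipC ipBl rmorphB /= -!ipC. Qed.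

Lemma ip_suml (F : seq int) (u : int -> V) z :
  ip (\sum_(j <- F) u j) z = \sum_(j <- F) ip (u j) z.
Proof. by elim: F => [|j F IH]; rewrite ?big_nil ?ip0l // !big_cons ipDl IH. Qed.

Lemma ip_extl x y : (forall z, ip x z = ip y z) -> x = y.
Proof.
move=> xy; apply/eqP; rewrite -subr_eq0; apply/eqP/(ip_posdef _).2.
by rewrite ipBl xy subrr.
Qed.

Lemma ip_extr x y : (forall z, ip z x = ip z y) -> x = y.
Proof. by move=> xy; apply: ip_extl => z; rewrite ipC xy -ipC. Qed.

Lemma cauchy_schwarz x y : `|ip x y| ^+ 2 <= ip x x * ip y y.
Proof.
have [->|y0] := eqVneq y 0.
  by rewrite ip0l ipC ip0l conjC0 normr0 expr0n /= mulr0.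
have yy_gt0 : 0 < ip y y.
  by rewrite lt_def (ip_posdef y).1 andbT; apply: contra_neq y0 => /(ip_posdef y).2.
set t := ip x y; set d := ip y y.
have d_neq0 : d != 0 by rewrite gt_eqF.
have dC : d^* = d by rewrite geC0_conj // ltW.
have := (ip_posdef (x - (t / d) *: y)).1.
rewrite !ipBl !ipBr !ipZl !ipZr -/t -/d (ipC x y) -/t rmorphM /= fmorphV /= dC => xty.
rewrite normCK -subr_ge0; move: (mulr_ge0 xty (ltW yy_gt0)).
by rewrite -/d; congr (0 <= _); field.
Qed.

Lemma has_sum_ip D (u : int -> V) s z : has_sum (fun x => ip x x) D u s ->
  cvg_fin D (fun F => \sum_(j <- F) ip (u j) z) (ip s z).
Proof.
move=> us e e0.
have zz1_gt0 : 0 < ip z z + 1 by rewrite ltr_wpDl ?ltr01 // (ip_posdef z).1.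
have [F0 [F0D k]] := us _ (divr_gt0 (exprn_gt0 2 e0) zz1_gt0).
exists F0; split=> // F uF FD sub; have := k F uF FD sub.
rewrite -ip_suml -ipBl; set d := s - _ => dd_small.
rewrite -(ltr_pXn2r (n := 2)) ?nnegrE ?normr_ge0 ?(ltW e0) //.
apply: le_lt_trans (cauchy_schwarz d z) _.
apply: le_lt_trans (_ : _ <= ip d d * (ip z z + 1)) _.
  by rewrite ler_wpM2l ?(ip_posdef d).1 // lerDl.
by rewrite -ltr_pdivlMr.
Qed.

Lemma orth_proj_ipl W P : is_orth_proj ip W P -> forall z w, W w -> ip (P z) w = ip z w.
Proof. by move=> PW z w Ww; apply/eqP; rewrite eq_sym -subr_eq0 -ipBl (PW z).2. Qed.

Lemma orth_proj_herm W P : is_orth_proj ip W P -> forall x y, ip (P x) y = ip x (P y).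
Proof.
move=> PW x y; rewrite -(orth_proj_ipl PW x (PW y).1).
have : ip (P x) (y - P y) = 0 by rewrite ipC (PW y).2 ?conjC0 //; exact: (PW x).1.
by rewrite ipBr => /eqP; rewrite subr_eq0 => /eqP.
Qed.

Lemma orth_proj_linear W P : closed_subspace ip W -> is_orth_proj ip W P ->
  forall a x y, P (a *: x + y) = a *: P x + P y.
Proof.
move=> [_ W_lin _] PW a x y; set d := P (a *: x + y) - (a *: P x + P y).
have Wd : W d.
  rewrite /d -scaleN1r addrC.
  by apply: (W_lin); [apply: (W_lin)|]; apply: (PW _).1.
apply/eqP; rewrite -subr_eq0; apply/eqP/(ip_posdef d).2.
by rewrite {1}/d ipBl ipDl ipZl !(orth_proj_ipl PW) // ipl subrr.
Qed.

Section SumOfOperators.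
Variables (D : set int) (T : int -> V -> V) (A : V -> V).
Hypothesis A_sum : forall x, has_sum (fun y => ip y y) D (fun j => T j x) (A x).

Hypothesis T_linear : forall j, D j -> forall a x y, T j (a *: x + y) = a *: T j x + T j y.
Hypothesis T_herm : forall j, D j -> forall x y, ip (T j x) y = ip x (T j y).
Hypothesis T_ge0 : forall j, D j -> forall x, 0 <= ip (T j x) x.

Lemma sum_op_linear a x y : A (a *: x + y) = a *: A x + A y.
Proof.
apply: ip_extl => z; rewrite ipl.
apply: cvg_fin_uniq (has_sum_ip z (A_sum (a *: x + y))) _.
apply: cvg_fin_ext (cvg_finD (cvg_finZ a (has_sum_ip z (A_sum x))) (has_sum_ip z (A_sum y))).
move=> F FD; rewrite mulr_sumr -big_split /=; apply: eq_big_seq => j /FD Dj.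
by rewrite T_linear // ipl.
Qed.

Lemma sum_op_herm x y : ip (A x) y = ip x (A y).
Proof.
rewrite (ipC (A y)); apply: cvg_fin_uniq (has_sum_ip y (A_sum x)) _.
apply: cvg_fin_ext (cvg_fin_conj (has_sum_ip x (A_sum y))) => F FD.
by rewrite rmorph_sum; apply: eq_big_seq => j /FD Dj; rewrite T_herm // (ipC (T j y)).
Qed.

Lemma sum_op_ge0 x : 0 <= ip (A x) x.
Proof.
apply: cvg_fin_ge0 (has_sum_ip x (A_sum x)) => F FD.
by rewrite big_seq sumr_ge0 // => j /FD Dj; apply: T_ge0.
Qed.

End SumOfOperators.

Lemma sum_op_mono (I J : set int) (T : int -> V -> V) (AI AJ : V -> V) :
  (I `<=` J)%classic -> (forall j, J j -> forall x, 0 <= ip (T j x) x) ->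
  (forall x, has_sum (fun y => ip y y) I (fun j => T j x) (AI x)) ->
  (forall x, has_sum (fun y => ip y y) J (fun j => T j x) (AJ x)) ->
  forall x, ip (AI x) x <= ip (AJ x) x.
Proof.
move=> IJ T_ge0 AI_sum AJ_sum x; rewrite -subr_ge0.
have := cvg_finB (has_sum_ip x (AJ_sum x)) (cvg_fin_filter IJ (has_sum_ip x (AI_sum x))).
apply: cvg_fin_ge0 => F FJ.
rewrite big_filter [X in X - _](bigID (fun j => `[< I j >])) /= addrAC subrr add0r.
by rewrite big_seq_cond sumr_ge0 // => j /andP [/FJ Jj _]; apply: T_ge0.
Qed.

Section SandwichDefect.
Variables S SI Sinv : V -> V.
Hypothesis S_linear : forall a x y, S (a *: x + y) = a *: S x + S y.
Hypothesis SI_linear : forall a x y, SI (a *: x + y) = a *: SI x + SI y.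
Hypothesis S_herm : forall x y, ip (S x) y = ip x (S y).
Hypothesis SI_herm : forall x y, ip (SI x) y = ip x (SI y).
Hypothesis SinvK : cancel Sinv S.
Hypothesis SI_ge0 : forall x, 0 <= ip (SI x) x.
Hypothesis SI_le_S : forall x, ip (SI x) x <= ip (S x) x.

Lemma sandwich_defect_ge0 f : 0 <= ip (SI f - SI (Sinv (SI f))) f.
Proof.
set h := Sinv (SI f); have Sh : S h = SI f := SinvK _.
have SIB : SI (f - h) = SI f - SI h.
  by rewrite -scaleN1r addrC SI_linear scaleN1r addrC.
have -> : ip (SI f - SI h) f = ip (SI (f - h)) (f - h) + (ip (S h) h - ip (SI h) h).
  by rewrite Sh SIB !ipBl !ipBr; ring.
by rewrite addr_ge0 ?subr_ge0.
Qed.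

Lemma sandwich_defect_le_quarter f : ip (SI f - SI (Sinv (SI f))) f <= 4^-1 * ip (S f) f.
Proof.
set h := Sinv (SI f); have Sh : S h = SI f := SinvK _.
have Sfh : ip (S f) h = ip (SI f) f by rewrite S_herm Sh -SI_herm.
have SIfh : ip (SI f) h = ip (SI h) f by rewrite (SI_herm h) -Sh S_herm.
have conj_half : (- 2^-1 : R[i])^* = - 2^-1 by rewrite rmorphN fmorphV rmorph_nat.
have S_ge0 := le_trans (SI_ge0 _) (SI_le_S ((- 2^-1) *: f + h)).
rewrite S_linear Sh !ipDl !ipZl !ipDr !ipZr conj_half Sfh SIfh in S_ge0.
by rewrite ipBl -subr_ge0; move: S_ge0; congr (0 <= _); field.
Qed.

End SandwichDefect.

End InnerProduct.

Section GFusionTerm.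
Variables (R : realType) (H K : lmodType R[i]).
Variables (ip : H -> H -> R[i]) (ipK : K -> K -> R[i]).
Hypothesis ipl : forall (a : R[i]) (x y z : H), ip (a *: x + y) z = a * ip x z + ip y z.
Hypothesis ipC : forall x y : H, ip y x = (ip x y)^*.
Hypothesis ip_posdef : forall x : H, 0 <= ip x x /\ (ip x x = 0 -> x = 0).
Hypothesis ipKl : forall (a : R[i]) (x y z : K), ipK (a *: x + y) z = a * ipK x z + ipK y z.
Hypothesis ipKC : forall x y : K, ipK y x = (ipK x y)^*.
Hypothesis ipK_posdef : forall x : K, 0 <= ipK x x /\ (ipK x x = 0 -> x = 0).
Variables (P : H -> H) (L : H -> K) (Ls : K -> H) (c : R).
Hypothesis P_linear : forall a x y, P (a *: x + y) = a *: P x + P y.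
Hypothesis P_herm : forall x y, ip (P x) y = ip x (P y).
Hypothesis L_linear : forall a x y, L (a *: x + y) = a *: L x + L y.
Hypothesis L_adj : is_adjoint ip ipK L Ls.

Lemma adjoint_linear a x y : Ls (a *: x + y) = a *: Ls x + Ls y.
Proof.
apply: (ip_extr ipl ipC ip_posdef) => z.
rewrite -L_adj (ipDr ipl ipC) (ipZr ipl ipC) -!L_adj.
by rewrite (ipDr ipKl ipKC) (ipZr ipKl ipKC).
Qed.

Definition gframe_term (x : H) : H := c%:C%C *: P (Ls (L (P x))).

Lemma gframe_term_ip x y : ip (gframe_term x) y = c%:C%C * ipK (L (P x)) (L (P y)).
Proof. by rewrite (ipZl ipl) P_herm (ipC (P y)) -L_adj -ipKC. Qed.

Lemma gframe_term_linear a x y :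
  gframe_term (a *: x + y) = a *: gframe_term x + gframe_term y.
Proof.
rewrite /gframe_term P_linear L_linear adjoint_linear P_linear.
by rewrite scalerDr !scalerA (mulrC a).
Qed.

Lemma gframe_term_herm x y : ip (gframe_term x) y = ip x (gframe_term y).
Proof.
rewrite (ipC (gframe_term y)) !gframe_term_ip rmorphM /=.
by rewrite conj_Creal ?complex_real // -ipKC.
Qed.

Lemma gframe_term_ge0 : 0 <= c -> forall x, 0 <= ip (gframe_term x) x.
Proof. by move=> c_ge0 x; rewrite gframe_term_ip mulr_ge0 ?ler0c ?(ipK_posdef _).1. Qed.

End GFusionTerm.

Section GFusionOperators.
Variables (R : realType) (H : lmodType R[i]) (ip : H -> H -> R[i]).
Variables (Hj : int -> lmodType R[i]) (ipj : forall j, Hj j -> Hj j -> R[i]).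
Variables (J : set int) (W : int -> H -> Prop) (P : int -> H -> H).
Variables (Lam : forall j, H -> Hj j) (Lams : forall j, Hj j -> H) (v : int -> R).
Hypothesis ipl : forall (a : R[i]) (x y z : H), ip (a *: x + y) z = a * ip x z + ip y z.
Hypothesis ipC : forall x y : H, ip y x = (ip x y)^*.
Hypothesis ip_posdef : forall x : H, 0 <= ip x x /\ (ip x x = 0 -> x = 0).
Hypothesis Hj_hilbert : forall j, J j -> is_hilbert (@ipj j).
Hypothesis Lam_adj : forall j, J j -> is_adjoint ip (@ipj j) (@Lam j) (@Lams j).
Hypothesis frame : gfusion_frame ip ipj J W P Lam v.

Local Notation T j := (gframe_term (P j) (@Lam j) (@Lams j) (v j ^+ 2)).

Lemma frame_family_linear j : J j -> forall a x y, T j (a *: x + y) = a *: T j x + T j y.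
Proof.
move=> Jj; have [ipjl ipjC _ _ _] := Hj_hilbert Jj.
have [PW _ Lam_bounded _] := frame; have [W_closed P_orth] := PW j Jj.
exact: gframe_term_linear ipl ipC ip_posdef ipjl ipjC _ _ _ _
  (orth_proj_linear ipl ip_posdef W_closed P_orth) (Lam_bounded j Jj).1 (Lam_adj Jj).
Qed.

Lemma frame_family_herm j : J j -> forall x y, ip (T j x) y = ip x (T j y).
Proof.
move=> Jj; have [_ ipjC _ _ _] := Hj_hilbert Jj.
have [PW _ _ _] := frame; have [_ P_orth] := PW j Jj.
exact: gframe_term_herm ipl ipC ipjC _ _ _ _ (orth_proj_herm ipl ipC P_orth) (Lam_adj Jj).
Qed.

Lemma frame_family_ge0 j : J j -> forall x, 0 <= ip (T j x) x.
Proof.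
move=> Jj; have [_ ipjC ipj_posdef _ _] := Hj_hilbert Jj.
have [PW _ _ _] := frame; have [_ P_orth] := PW j Jj.
exact: gframe_term_ge0 ipl ipC ipjC ipj_posdef _ _ _ _
  (orth_proj_herm ipl ipC P_orth) (Lam_adj Jj) (sqr_ge0 _).
Qed.

Variables (D : set int) (Sop : H -> H).
Hypothesis DJ : (D `<=` J)%classic.
Hypothesis Sop_sum : is_partial_frame_op ip D P Lam Lams v Sop.

Lemma partial_frame_op_linear a x y : Sop (a *: x + y) = a *: Sop x + Sop y.
Proof.
apply: (sum_op_linear ipl ipC ip_posdef (T := fun j => T j) Sop_sum).
by move=> j /DJ; apply: frame_family_linear.
Qed.

Lemma partial_frame_op_herm x y : ip (Sop x) y = ip x (Sop y).
Proof.
apply: (sum_op_herm ipl ipC ip_posdef (T := fun j => T j) Sop_sum).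
by move=> j /DJ; apply: frame_family_herm.
Qed.

Lemma partial_frame_op_mono (S : H -> H) :
  is_partial_frame_op ip J P Lam Lams v S -> forall x, ip (Sop x) x <= ip (S x) x.
Proof.
exact: (sum_op_mono ipl ipC ip_posdef (T := fun j => T j) DJ frame_family_ge0 Sop_sum).
Qed.

Lemma partial_frame_op_ge0 x : 0 <= ip (Sop x) x.
Proof.
apply: (sum_op_ge0 ipl ipC ip_posdef (T := fun j => T j) Sop_sum).
by move=> j /DJ; apply: frame_family_ge0.
Qed.

End GFusionOperators.

Theorem corollary3p3 (R : realType)
  (H : lmodType R[i]) (ip : H -> H -> R[i])
  (Hj : int -> lmodType R[i]) (ipj : forall j, Hj j -> Hj j -> R[i])
  (J I : set int) (W : int -> H -> Prop) (P : int -> H -> H)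
  (Lam : forall j, H -> Hj j) (Lams : forall j, Hj j -> H) (v : int -> R)
  (S SI Sinv : H -> H) :
  is_hilbert ip ->
  (forall j, J j -> is_hilbert (@ipj j)) ->
  (forall j, J j -> is_adjoint ip (@ipj j) (Lam j) (Lams j)) ->
  gfusion_frame ip ipj J W P Lam v ->
  is_partial_frame_op ip J P Lam Lams v S ->
  (forall f, S (Sinv f) = f) -> (forall f, Sinv (S f) = f) ->
  (I `<=` J)%classic ->
  is_partial_frame_op ip I P Lam Lams v SI ->
  forall f : H,
    0 <= ip (SI f - SI (Sinv (SI f))) f /\
    ip (SI f - SI (Sinv (SI f))) f <= 4^-1 * ip (S f) f.
Proof.
move=> [ipl ipC ip_posdef _ _] Hj_hilbert Lam_adj frame S_sum SinvK _ IJ SI_sum f.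
have op_linear := partial_frame_op_linear ipl ipC ip_posdef Hj_hilbert Lam_adj frame.
have op_herm := partial_frame_op_herm ipl ipC ip_posdef Hj_hilbert Lam_adj frame.
have S_linear := op_linear _ _ (@subset_refl _ J) S_sum.
have S_herm := op_herm _ _ (@subset_refl _ J) S_sum.
have SI_linear := op_linear _ _ IJ SI_sum.
have SI_herm := op_herm _ _ IJ SI_sum.
have SI_ge0 := partial_frame_op_ge0 ipl ipC ip_posdef Hj_hilbert Lam_adj frame IJ SI_sum.
have SI_le_S :=
  partial_frame_op_mono ipl ipC ip_posdef Hj_hilbert Lam_adj frame IJ SI_sum S_sum.
split.
  exact: sandwich_defect_ge0 ipl ipC S SI Sinv SI_linear SinvK SI_ge0 SI_le_S f.
exact: sandwich_defect_le_quarter ipl ipC S SI Sinv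
  S_linear S_herm SI_herm SinvK SI_ge0 SI_le_S f.
Qed.
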